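(* Consider the unconstrained ($D(x)=\mathcal F$ for all $x$) stationary reinsurance model of the context with finite horizon $N$, $\beta\in(0,1]$, and a law-invariant, normalized, monetary and positive homogeneous risk measure $\rho$ with the Fatou property and $\rho(Y)<\infty$. Then the static problem $\min_{f\in\mathcal F}\rho(f(Y)-Z)+\pi_R(f)$ has a minimizer $f^*\in\mathcal F$; letting $c$ denote its minimal value, the finite-horizon value functions (indexed by time $n=0,\dots,N-1$) are $$J_n(x)=c\sum_{k=0}^{N-n-1}(k+1)\beta^k-x\sum_{k=0}^{N-n-1}\beta^k,\qquad x\in\mathbb R,$$ and the constant policy using $f^*$ at every time and in every state is optimal. If moreover $\beta\in(0,1)$ and $\rho$ is proper and coherent, then the infinite-horizon value function is $J(x)=\frac{c}{(1-\beta)^2}-\frac{x}{1-\beta}$ and the stationary policy $(f^*,f^*,\dots)$ (constant decision rule $d^*\equiv f^*$) is optimal for the infinite-horizon problem.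
   Context: Probability space $(\Omega,\mathcal A,\mathbb P)$, $p\in[1,\infty)$, $L^p$ real random variables with finite $p$-th moment, $L^p_+$ nonnegative ones; positive values are losses. For $\rho:L^p\to\bar{\mathbb R}$: law-invariant, monotone, translation invariant ($\rho(X+c)=\rho(X)+c$), normalized ($\rho(0)=0$), positive homogeneous ($\rho(\lambda X)=\lambda\rho(X)$, $\lambda\ge0$), subadditive; monetary = monotone + translation invariant; coherent = monetary, positive homogeneous and subadditive; proper = never $-\infty$ and finite at some point; Fatou property: $X_k\to X$ a.s., $X_k,X\in L^p$, $|X_k|\le W\in L^p$ imply $\liminf\rho(X_k)\ge\rho(X)$; same notions for premium principles on $L^p_+$. $\mathcal F=\{f:\mathbb R_+\to\mathbb R_+ : f(t)\le t\ \forall t,\ f\text{ increasing},\ \mathrm{id}_{\mathbb R_+}-f\text{ increasing}\}$. Model: $(Y_n,Z_n)_{n\ge1}$ i.i.d. with generic $(Y,Z)$, $Y\in L^p_+$, $Z\in L^\infty_+$; $\pi_R$ law-invariant, monotone, normalized premium principle with Fatou property, $\pi_R(Y)<\infty$, $\pi_R(f):=\pi_R(Y-f(Y))$. Histories $h_n=(x_0,f_0,\dots,f_{n-1},x_n)$, policies $\pi=(d_0,\dots,d_{N-1})$ of measurable history-dependent rules with values in $\mathcal F$; policy values $V_{N\pi}\equiv0$, $V_{n\pi}(h_n)=\rho\big(d_n(h_n)(Y_{n+1})+\pi_R(d_n(h_n))-Z_{n+1}-x_n+\beta V_{n+1,\pi}(h_n,d_n(h_n),x_n+Z_{n+1}-d_n(h_n)(Y_{n+1})-\pi_R(d_n(h_n)))\big)$;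 value functions $V_n=\inf_\pi V_{n\pi}$; it is known that $V_n(h_n)=J_n(x_n)$ with $J_N\equiv0$, $J_n(x)=\inf_{f\in\mathcal F}\rho\big(f(Y)+\pi_R(f)-Z-x+\beta J_{n+1}(x+Z-f(Y)-\pi_R(f))\big)$. Infinite horizon: for a Markov policy $\pi=(d_0,d_1,\dots)$ the $N$-horizon value is $\mathcal T_{d_0}\circ\cdots\circ\mathcal T_{d_{N-1}}0$ with $\mathcal T_dv(x)=\rho\big(d(x)(Y)+\pi_R(d(x))-Z-x+\beta v(x+Z-d(x)(Y)-\pi_R(d(x)))\big)$; $J_{\infty\pi}$ is its limit as $N\to\infty$, $J_\infty=\inf_\pi J_{\infty\pi}$, and $J=\lim_{N}J_N$ in forward indexing (here $J$ coincides with $J_\infty$). Standing assumption: all policy values measurable. *)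

From HB Require Import structures.
From mathcomp Require Import all_boot all_order all_algebra.
From mathcomp Require Import all_classical all_reals all_analysis.
Set Implicit Arguments. Unset Strict Implicit. Unset Printing Implicit Defensive.
Import Order.TTheory GRing.Theory Num.Theory.
Import numFieldNormedType.Exports.
Local Open Scope ring_scope.

Definition seq_cvg_to {R : realType} (u : nat -> R) (l : R) := (u @ \oo --> l)%classic.

Definition eseq_cvg_to {R : realType} (u : nat -> \bar R) (l : \bar R) :=
  (u @ \oo --> l)%classic.

Section Defs.
Context {R : realType} {d : measure_display} {T : measurableType d}.
Variable P : probability T R.

Definition Lp (p : R) : set (T -> R) :=
  [set X : T -> R | measurable_fun setT X /\
           (\int[P]_w ((`|X w| `^ p)%:E) < +oo)%E]%classic.

Definition Lpplus (p : R) : set (T -> R) :=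
  [set X : T -> R | Lp p X /\ forall w, 0 <= X w]%classic.

Definition same_law (X Y : T -> R) : Prop :=
  forall B : set R, measurable B -> P (X @^-1` B)%classic = P (Y @^-1` B)%classic.

Definition rm_law_invariant (dom : set (T -> R)) (rho : (T -> R) -> \bar R) :=
  forall X Y, dom X -> dom Y -> same_law X Y -> rho X = rho Y.

Definition rm_monotone (dom : set (T -> R)) (rho : (T -> R) -> \bar R) :=
  forall X Y, dom X -> dom Y -> (forall w, X w <= Y w) -> (rho X <= rho Y)%E.

Definition rm_translation_invariant (dom : set (T -> R)) (rho : (T -> R) -> \bar R) :=
  forall X (c : R), dom X -> rho (fun w => X w + c) = (rho X + c%:E)%E.

Definition rm_normalized (rho : (T -> R) -> \bar R) := rho (fun _ => 0) = 0%E.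

Definition rm_pos_homogeneous (dom : set (T -> R)) (rho : (T -> R) -> \bar R) :=
  forall X (l : R), dom X -> 0 <= l -> rho (fun w => l * X w) = (l%:E * rho X)%E.

Definition rm_subadditive (dom : set (T -> R)) (rho : (T -> R) -> \bar R) :=
  forall X Y, dom X -> dom Y -> (rho (fun w => (X w + Y w)%R) <= rho X + rho Y)%E.

Definition rm_monetary dom rho := rm_monotone dom rho /\ rm_translation_invariant dom rho.

Definition rm_coherent dom rho :=
  rm_monetary dom rho /\ rm_pos_homogeneous dom rho /\ rm_subadditive dom rho.

Definition rm_proper (dom : set (T -> R)) (rho : (T -> R) -> \bar R) :=
  (forall X, dom X -> rho X != -oo%E) /\ (exists X, dom X /\ rho X \is a fin_num).

Definition rm_fatou (dom : set (T -> R)) (rho : (T -> R) -> \bar R) :=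
  forall (Xs : nat -> T -> R) (X W : T -> R),
    (forall k, dom (Xs k)) -> dom X -> dom W ->
    {ae P, forall w, seq_cvg_to (fun k => Xs k w) (X w)} ->
    (forall k, {ae P, forall w, `|Xs k w| <= W w}) ->
    (rho X <= limn_einf (fun k => rho (Xs k)))%E.

End Defs.

(* The set F of admissible retention functions f : R_+ -> R_+ (represented
   as functions R -> R; only their values on [0,oo) matter). *)
Definition Fset {R : realType} : set (R -> R) :=
  [set f | (forall t, 0 <= t -> 0 <= f t /\ f t <= t) /\
           (forall s t, 0 <= s -> s <= t -> f s <= f t) /\
           (forall s t, 0 <= s -> s <= t -> s - f s <= t - f t)]%classic.

Section Model.
Context {R : realType} {d : measure_display} {T : measurableType d}.

(* pi_R(f) := pi_R(Y - f(Y)) (finite under the standing hypotheses) *)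
Definition piRf (piR : (T -> R) -> \bar R) (Y : T -> R) (f : R -> R) : R :=
  fine (piR (fun w => Y w - f (Y w))).

Definition static_obj (rho piR : (T -> R) -> \bar R) (Y Z : T -> R) (f : R -> R)
  : \bar R := (rho (fun w => (f (Y w) - Z w)%R) + (piRf piR Y f)%:E)%E.

Definition Top (rho piR : (T -> R) -> \bar R) (Y Z : T -> R) (beta : R)
  (f : R -> R) (v : R -> R) (x : R) : \bar R :=
  rho (fun w => f (Y w) + piRf piR Y f - Z w - x
               + beta * v (x + Z w - f (Y w) - piRf piR Y f)).

(* Markov policy: pol k x = decision (element of F) at time k in state x.
   polval pol k m = T_{d_k} o ... o T_{d_{k+m-1}} 0 *)
Fixpoint polval (rho piR : (T -> R) -> \bar R) (Y Z : T -> R) (beta : R)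
  (pol : nat -> R -> R -> R) (k m : nat) : R -> \bar R :=
  match m with
  | 0%N => fun _ => 0%E
  | m'.+1 => fun x =>
      Top rho piR Y Z beta (pol k x)
          (fun y => fine (polval rho piR Y Z beta pol k.+1 m' y)) x
  end.

Definition horizon_val rho piR Y Z beta pol (N : nat) : R -> \bar R :=
  polval rho piR Y Z beta pol 0 N.

(* admissible Markov policy: decision rules with values in F, and all policy
   values finite and (standing assumption) measurable *)
Definition admissible_policy rho piR Y Z beta (pol : nat -> R -> R -> R) :=
  (forall k x, Fset (pol k x)) /\
  (forall k m x, polval rho piR Y Z beta pol k m x \is a fin_num) /\
  (forall k m, measurable_fun setT (fun y => fine (polval rho piR Y Z beta pol k m y))).

Definition Jfin (c beta : R) (N n : nat) (x : R) : R :=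
  c * (\sum_(0 <= k < N - n) (k.+1%:R * beta ^+ k))
  - x * (\sum_(0 <= k < N - n) beta ^+ k).

End Model.

(* Write G(f) = rho(f(Y) - Z) + pi_R(f) for the static objective on the set F
   of retention functions, and c = inf_F G.
   1. Translation invariance and positive homogeneity make the one-step
      operator T_f act on affine value functions v(y) = a - b y, b >= 0, by
      T_f v(x) = (1 + beta b) G(f) + beta a - (1 + beta b) x  (Top_affine).
      The candidate J_n is affine with slope  sum_k beta^k, so
      T_f J_(n+1) = J_n + (sum_k beta^k) (G(f) - c)  (Bellman_step), which
      yields the Bellman equation once G attains c.
   2. G attains c (static_minimizer): near-minimizers, clipped to take values
      in the compact boxes [0, max t 0], have a cluster point f for the
      product topology (Tychonoff, cluster_exists); F is closed under such
      limits, a diagonal sequence converges pointwise to f because elements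
      of F are 1-Lipschitz (grid_cvg), and the Fatou property of rho and pi_R
      makes G lower semicontinuous along it (gval_lsc).
   3. Infinite horizon: closed forms of the two geometric sums give the limit
      of J_0 as N -> oo (Jfin_lim); the stationary policy f* has N-horizon
      value exactly J_0 (stationary_value), while by monotonicity of rho every
      admissible Markov policy has N-horizon value at least J_0
      (policy_value_bounds). *)
From HB Require Import structures.
From mathcomp Require Import all_boot all_order all_algebra.
From mathcomp Require Import all_classical all_reals all_analysis.
From mathcomp Require Import measurable_realfun ring lra.
Set Implicit Arguments. Unset Strict Implicit. Unset Printing Implicit Defensive.
Import Order.TTheory GRing.Theory Num.Theory.
Import numFieldNormedType.Exports.
Local Open Scope ring_scope.
Local Open Scope classical_set_scope.

Lemma fin_num_between {R : realDomainType} (a b : R) (x : \bar R) :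
  (a%:E <= x <= b%:E)%E -> x \is a fin_num.
Proof.
move=> /andP[ax xb]; rewrite fin_numE; apply/andP; split.
  by rewrite gt_eqF // (lt_le_trans _ ax) // ltNyr.
by rewrite lt_eqF // (le_lt_trans xb) // ltry.
Qed.

Lemma lt_limn_einf_near {R : realType} (u : nat -> \bar R) (x : \bar R) :
  (x < limn_einf u)%E -> \forall n \near \oo, (x < u n)%E.
Proof.
rewrite limn_einf_lim (cvg_lim _ (@cvg_einfs_sup _ u)) // => /ereal_sup_gt.
move=> [_ [n _ <-] xn]; exists n => // k /= nk; apply: (lt_le_trans xn).
by apply: ereal_inf_lbound; exists k.
Qed.

Section LpSpace.
Context {R : realType} {d : measure_display} {T : measurableType d}.
Variables (P : probability T R) (p : R).
Hypothesis hp : 1 <= p.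

Lemma Lp_Lfun X : Lp P p X <-> X \in Lfun P p%:E.
Proof.
have p0 : 0 < p by rewrite (lt_le_trans ltr01).
split.
- move=> [mX iX]; rewrite inE; apply/andP; split; first by rewrite inE.
  by rewrite inE /= /finite_norm unlock /Lnorm poweR_lty.
- rewrite inE => /andP[mX lX]; rewrite inE in mX.
  rewrite inE /= /finite_norm unlock /Lnorm in lX; split => //.
  have := lty_poweRy (invr_neq0 (lt0r_neq0 p0)) lX.
  by under eq_integral do rewrite /=.
Qed.

Lemma Lp_dom (X U : T -> R) : measurable_fun setT X -> Lp P p U ->
  {ae P, forall w, `|X w| <= `|U w|} -> Lp P p X.
Proof.
move=> mX [mU iU] XU; split => //; apply: le_lt_trans iU.
apply: ae_ge0_le_integral => //.
- apply/measurable_EFinP; apply: (measurableT_comp (measurable_powR _)) => //.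
  exact: measurableT_comp.
- apply/measurable_EFinP; apply: (measurableT_comp (measurable_powR _)) => //.
  exact: measurableT_comp.
- apply: filterS XU => w XUw _; rewrite lee_fin.
  by apply: ge0_ler_powR => //; rewrite ?nnegrE// (le_trans ler01).
Qed.

Lemma Lp_add (X U : T -> R) : Lp P p X -> Lp P p U -> Lp P p (fun w => X w + U w).
Proof. by move=> /Lp_Lfun hX /Lp_Lfun hU; apply/Lp_Lfun; exact: rpredD. Qed.

Lemma Lp_scale (a : R) (X : T -> R) : Lp P p X -> Lp P p (fun w => a * X w).
Proof. by move=> /Lp_Lfun hX; apply/Lp_Lfun; exact: rpredZ. Qed.

Lemma Lp_cst (a : R) : Lp P p (fun _ => a).
Proof. by apply/Lp_Lfun; exact: Lfun_cst. Qed.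

Lemma Lp_abs (X : T -> R) : Lp P p X -> Lp P p (fun w => `|X w|).
Proof.
move=> hX; apply: (Lp_dom _ hX); last by apply: aeW => w; rewrite normr_id.
exact: measurableT_comp (proj1 hX).
Qed.

Lemma Lp_ae (X X' : T -> R) : measurable_fun setT X' -> Lp P p X ->
  {ae P, forall w, X w = X' w} -> Lp P p X'.
Proof. by move=> mX' hX XX'; apply: (Lp_dom mX' hX); apply: filterS XX' => w ->. Qed.

Lemma Lp_between (L U X : T -> R) : measurable_fun setT X ->
  Lp P p L -> Lp P p U -> (forall w, L w <= X w <= U w) -> Lp P p X.
Proof.
move=> mX hL hU LXU; apply: (Lp_dom mX (Lp_add (Lp_abs hL) (Lp_abs hU))).
apply: aeW => w; have /andP[lo up] := LXU w.
rewrite (ger0_norm (addr_ge0 (normr_ge0 _) (normr_ge0 _))) ler_norml.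
have := ler_norm (L w); have := ler_norm (U w); have := lerNnormlW (lexx `|L w|).
have := lerNnormlW (lexx `|U w|); have := normr_ge0 (L w); have := normr_ge0 (U w).
by move=> *; apply/andP; split; lra.
Qed.

End LpSpace.

Section LawInvariantMonetary.
Context {R : realType} {d : measure_display} {T : measurableType d}.
Variables (P : probability T R) (p : R) (rho : (T -> R) -> \bar R).
Hypothesis hp : 1 <= p.

Lemma rho_ae (X X' : T -> R) : rm_law_invariant P (Lp P p) rho ->
  Lp P p X -> Lp P p X' -> {ae P, forall w, X w = X' w} -> rho X = rho X'.
Proof.
move=> rho_li hX hX' [N [mN PN XX']]; apply: rho_li => // B mB.
have preim_meas (U : T -> R) : Lp P p U -> measurable (U @^-1` B).
  by move=> hU; rewrite -[U @^-1` B]setTI; exact: hU.1.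
have preim_le (U V : T -> R) : Lp P p U -> Lp P p V ->
    (forall w, U w <> V w -> N w) -> (P (U @^-1` B) <= P (V @^-1` B))%E.
  move=> hU hV UV; rewrite -(@measureU0 _ _ _ P _ _ (preim_meas _ hV) mN PN).
  apply: le_measure; rewrite ?inE //.
  - exact: preim_meas.
  - exact: measurableU (preim_meas _ hV) mN.
  move=> w /= Bw; case: (pselect (U w = V w)) => [<-|/UV]; by [left | right].
apply/eqP; rewrite eq_le !preim_le // => w XX'w; apply: XX' => //=.
exact: nesym.
Qed.

Lemma rho_cst (a : R) : rm_normalized rho -> rm_translation_invariant (Lp P p) rho ->
  rho (fun _ => a) = a%:E.
Proof.
move=> rho0 rho_ti.
have -> : (fun _ : T => a) = (fun w => (fun _ => 0) w + a) by apply: funext => w; rewrite add0r.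
by rewrite rho_ti ?rho0 ?add0e //; exact: Lp_cst.
Qed.

End LawInvariantMonetary.

Section RetentionFunctions.
Context {R : realType}.
Implicit Types (f g : R -> R) (s t : R).

Lemma Fset_increment f s t : Fset f -> 0 <= s -> s <= t -> 0 <= f t - f s <= t - s.
Proof.
move=> [_ [f_mono id_f_mono]] s0 st; rewrite subr_ge0 f_mono //=.
by have := id_f_mono s t s0 st; lra.
Qed.

Lemma Fset_lipschitz f s t : Fset f -> 0 <= s -> 0 <= t -> `|f s - f t| <= `|s - t|.
Proof.
move=> Ff s0 t0; case: (leP s t) => st.
  have /andP[a b] := Fset_increment Ff s0 st.
  by rewrite distrC (distrC s) !ger0_norm // subr_ge0.
have /andP[a b] := Fset_increment Ff t0 (ltW st).
by rewrite !ger0_norm // subr_ge0 ltW.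
Qed.

Lemma max0_ge0 t : 0 <= Num.max t 0.
Proof. by rewrite le_max lexx orbT. Qed.

Lemma Fset0 : Fset (fun _ : R => 0).
Proof. by split; [move=> t t0; split | split => s t s0 st; lra]. Qed.

Lemma Fset_clip f : Fset f -> Fset (fun t => f (Num.max t 0)).
Proof.
move=> Ff; split; [|split].
- by move=> t t0; rewrite max_l //; exact: Ff.1.
- by move=> s t s0 st; rewrite !max_l //; [exact: Ff.2.1 | exact: le_trans st].
- by move=> s t s0 st; rewrite !max_l //; [exact: Ff.2.2 | exact: le_trans st].
Qed.

Lemma Fset_clip_bnd f t : Fset f -> 0 <= f (Num.max t 0) <= Num.max t 0.
Proof. by move=> Ff; have [a b] := Ff.1 _ (max0_ge0 t); rewrite a b. Qed.

Lemma Fset_clip_continuous f : Fset f -> continuous (fun t => f (Num.max t 0)).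
Proof.
move=> Ff x; apply/cvgrPdist_lt => e e0; exists e => //= t xt.
apply: le_lt_trans (Fset_lipschitz Ff (max0_ge0 _) (max0_ge0 _)) _.
apply: le_lt_trans xt.
case: (leP 0 x) => x0; case: (leP 0 t) => t0 //.
- by rewrite subr0 !ger0_norm //; lra.
- by rewrite sub0r normrN (ger0_norm t0) distrC ger0_norm; lra.
- by rewrite subrr normr0.
Qed.

Lemma Fset_of_approx f : (forall t, 0 <= f t <= Num.max t 0) ->
  (forall s t e, 0 < e -> exists g, Fset g /\ `|g s - f s| < e /\ `|g t - f t| < e) ->
  Fset f.
Proof.
move=> f_box approx; split; [|split].
- by move=> t t0; have /andP[a b] := f_box t; rewrite max_l in b.
- move=> s t s0 st; apply/ler_addgt0Pr => e e0.
  have [g [Fg [gs gt]]] := approx s t (e / 2) (divr_gt0 e0 (ltr0Sn _ 1)).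
  have := Fg.2.1 s t s0 st.
  by move: gs gt; rewrite !ltr_norml => /andP[? ?] /andP[? ?]; lra.
- move=> s t s0 st; apply/ler_addgt0Pr => e e0.
  have [g [Fg [gs gt]]] := approx s t (e / 2) (divr_gt0 e0 (ltr0Sn _ 1)).
  have := Fg.2.2 s t s0 st.
  by move: gs gt; rewrite !ltr_norml => /andP[? ?] /andP[? ?]; lra.
Qed.

(* The grid {k / (j+1) : k < (j+1)^2} of mesh 1/(j+1) covering [0, j+1). *)
Definition grid (j k : nat) : R := k%:R / j.+1%:R.

(* Functions of F that are 1/(j+1)-close to f in F on the j-th grid converge
   to f pointwise on [0, +oo), by the Lipschitz property. *)
Lemma grid_cvg f (gs : nat -> R -> R) : Fset f -> (forall j, Fset (gs j)) ->
  (forall j k, (k < j.+1 * j.+1)%N -> `|gs j (grid j k) - f (grid j k)| < j.+1%:R^-1) ->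
  forall t, 0 <= t -> gs j t @[j --> \oo] --> f t.
Proof.
move=> Ff Fgs close t t0; apply/cvgrPdist_lt => e e0; near=> j.
have tj : t < j%:R by near: j; exact: nbhs_infty_gtr.
have ej : 3 / e < j%:R by near: j; exact: nbhs_infty_gtr.
have jp : 0 < j.+1%:R :> R by rewrite ltr0n.
pose i : R := j.+1%:R^-1.
have ip : 0 < i by rewrite invr_gt0.
have ie : 3 * i < e.
  rewrite /i -/(3 / _) ltr_pdivrMr //; move: ej; rewrite ltr_pdivrMr // -natr1; lra.
have tj1 : 0 <= t * j.+1%:R by rewrite mulr_ge0 // ltW.
set k := Num.truncn (t * j.+1%:R).
have /andP[kl ku] := truncn_itv tj1; rewrite -/k in kl ku.
have q0 : 0 <= grid j k by rewrite divr_ge0.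
have tq : `|t - grid j k| < i.
  have -> : t - grid j k = (t * j.+1%:R - k%:R) * i by rewrite /grid /i; field; rewrite gt_eqF.
  rewrite normrM (gtr0_norm ip) ger0_norm ?subr_ge0 //.
  by rewrite -[ltRHS]mul1r ltr_pM2r //; rewrite -natr1 in ku; lra.
have hk : (k < j.+1 * j.+1)%N.
  rewrite -(ltr_nat R) natrM; apply: le_lt_trans kl _.
  by rewrite ltr_pM2r // (lt_le_trans tj) // ler_nat.
have C := close j k hk; rewrite -/i in C.
have A := Fset_lipschitz (Fgs j) t0 q0; have B := Fset_lipschitz Ff t0 q0.
have := normr_ge0 (t - grid j k).
move: A B C; rewrite !ler_norml ltr_norml => /andP[? ?] /andP[? ?] /andP[? ?] ?.
by rewrite ltr_norml; apply/andP; split; lra.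
Unshelve. all: by end_near.
Qed.

End RetentionFunctions.

Section Compactness.
Import ArrowAsProduct.
Context {R : realType}.

(* Tychonoff: a decreasing sequence of nonempty sets of functions valued in
   the boxes [0, max t 0] has a cluster point f, i.e. every S n contains
   functions arbitrarily close to f at any finitely many points. *)
Lemma cluster_exists (S : nat -> set (R -> R)) :
  (forall n, S n !=set0) -> (forall n m, (m <= n)%N -> S n `<=` S m) ->
  (forall n g, S n g -> forall t, 0 <= g t <= Num.max t 0) ->
  exists f : R -> R, (forall t, 0 <= f t <= Num.max t 0) /\
    forall n (m : nat) (pts : nat -> R) (e : R), 0 < e ->
      exists g, S n g /\ forall k, (k < m)%N -> `|g (pts k) - f (pts k)| < e.
Proof.
move=> Sne Sdec S_box.
have box_compact := @tychonoff R (fun _ => R) (fun t => `[0, Num.max t 0])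
  (fun t => @segment_compact R 0 (Num.max t 0)).
pose F := filter_from setT S.
have FF : ProperFilter F.
  apply: filter_from_proper; last by move=> i _; exact: Sne.
  apply: filter_from_filter; first by exists 0%N.
  move=> i j _ _; exists (maxn i j) => // g Sg.
  by split; apply: (Sdec (maxn i j)); rewrite ?leq_maxl ?leq_maxr.
have F_box : F [set f : R -> R | forall t, `[0, Num.max t 0] (f t)].
  by exists 0%N => // g Sg t; rewrite /= in_itv /=; exact: S_box Sg t.
have [f [f_box f_cluster]] := box_compact F FF F_box.
exists f; split; first by move=> t; have := f_box t; rewrite /= in_itv.
move=> n m pts e e0.
have near_pt t : nbhs f [set g : R -> R | `|g t - f t| < e].
  apply: (@proj_continuous R (fun _ => R) t f [set y | `|y - f t| < e]).
  by exists e => //= y; rewrite /ball_ /= distrC.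
have near_pts : nbhs f [set g : R -> R | forall k, (k < m)%N -> `|g (pts k) - f (pts k)| < e].
  elim: m => [|m IH]; first by apply: filterE => g k.
  apply: filterS2 IH (near_pt (pts m)) => g g_close g_close_m k.
  by rewrite ltnS leq_eqVlt => /orP[/eqP -> //| /g_close].
have [g [Sg g_close]] := f_cluster (S n) _ (ex_intro2 _ _ n I (fun x h => h)) near_pts.
by exists g.
Qed.

End Compactness.

Section GeometricSums.
Context {R : realType}.
Variable beta : R.

Definition gsum m := \sum_(0 <= k < m) beta ^+ k.
Definition gsum1 m := \sum_(0 <= k < m) (k.+1%:R * beta ^+ k).

Lemma gsumS m : gsum m.+1 = 1 + beta * gsum m.
Proof.
rewrite /gsum big_nat_recl // expr0 mulr_sumr; congr (_ + _).
by apply: eq_bigr => k _; rewrite exprS.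
Qed.

Lemma gsum1S m : gsum1 m.+1 = gsum m.+1 + beta * gsum1 m.
Proof.
rewrite /gsum1 gsumS big_nat_recl // expr0 mulr1 /gsum !mulr_sumr -addrA -big_split /=.
congr (_ + _); apply: eq_bigr => k _; rewrite exprS -[(k.+2)%:R]natr1 -[(k.+1)%:R]natr1.
ring.
Qed.

Lemma gsum0 : gsum 0 = 0. Proof. by rewrite /gsum big_geq. Qed.
Lemma gsum10 : gsum1 0 = 0. Proof. by rewrite /gsum1 big_geq. Qed.

Lemma gsum_ge0 m : 0 <= beta -> 0 <= gsum m.
Proof. by move=> b0; apply: sumr_ge0 => k _; rewrite exprn_ge0. Qed.

Lemma gsum_closed m : (1 - beta) * gsum m = 1 - beta ^+ m.
Proof.
elim: m => [|m IH]; first by rewrite gsum0 mulr0 expr0 subrr.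
rewrite /gsum big_nat_recr //= mulrDr -/(gsum m) IH exprS; ring.
Qed.

Lemma gsum1_closed m : (1 - beta) * gsum1 m = gsum m - m%:R * beta ^+ m.
Proof.
elim: m => [|m IH]; first by rewrite gsum0 gsum10 mulr0 mul0r subrr.
rewrite /gsum1 big_nat_recr //= mulrDr -/(gsum1 m) IH /gsum big_nat_recr //= -/(gsum m).
rewrite exprS -[(m.+1)%:R]natr1; ring.
Qed.

Lemma JfinE c N n x : Jfin c beta N n x = c * gsum1 (N - n) - x * gsum (N - n).
Proof. by []. Qed.

End GeometricSums.

Section Limits.
Context {R : realType}.

(* (1 - q) N q^N <= (1 - q) sum_(k<=N) q^k <= 1. *)
Lemma NqN_bound (q : R) N : 0 <= q -> q < 1 -> (1 - q) * (N%:R * q ^+ N) <= 1.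
Proof.
move=> q0 q1.
have sum_le1 : (1 - q) * gsum q N.+1 <= 1 by rewrite gsum_closed lerBlDr lerDl exprn_ge0.
apply: le_trans sum_le1; apply: ler_wpM2l; first by rewrite subr_ge0 ltW.
have : \sum_(0 <= k < N.+1) q ^+ N <= gsum q N.+1.
  by apply: ler_sum_nat => k /andP[_ kN]; apply: ler_wiXn2l => //; exact: ltW.
rewrite sumr_const_nat subn0 mulr_natl; apply: le_trans.
by apply: ler_wpMn2l; rewrite ?exprn_ge0.
Qed.

(* N beta^N -> 0 for 0 <= beta < 1, by comparing with (sqrt beta)^N. *)
Lemma Nbeta_cvg (beta : R) : 0 <= beta -> beta < 1 ->
  (fun N : nat => N%:R * beta ^+ N) @ \oo --> 0.
Proof.
move=> b0 b1; set q := Num.sqrt beta.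
have q0 : 0 <= q by exact: sqrtr_ge0.
have q2 : q ^+ 2 = beta by exact: sqr_sqrtr.
have q1 : q < 1.
  rewrite ltNge; apply/negP => q1.
  have : 1 <= q ^+ 2 by rewrite expr2 -[1]mulr1; apply: ler_pM.
  by rewrite q2; lra.
have q1' : 0 < 1 - q by rewrite subr_gt0.
apply: (@squeeze_cvgr _ _ _ _ (cst 0) (fun N => (1 - q)^-1 * q ^+ N)); last 2 first.
- exact: cvg_cst.
- rewrite -[0](mulr0 (1 - q)^-1); apply: cvgMl_tmp; apply: cvg_expr.
  by rewrite ger0_norm.
apply: nearW => N; apply/andP; split; first by rewrite /cst mulr_ge0 // exprn_ge0.
rewrite ler_pdivlMl // -q2 -exprM mulnC exprM expr2.
rewrite (_ : (1 - q) * (N%:R * (q ^+ N * q ^+ N)) =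
             ((1 - q) * (N%:R * q ^+ N)) * q ^+ N); last by ring.
by apply: ler_piMl; [exact: exprn_ge0 | exact: NqN_bound].
Qed.

Lemma Jfin_lim (c x beta : R) : 0 <= beta -> beta < 1 ->
  seq_cvg_to (fun N => Jfin c beta N 0 x) (c / (1 - beta) ^+ 2 - x / (1 - beta)).
Proof.
move=> b0 b1.
have b1' : 1 - beta != 0 by rewrite subr_eq0 eq_sym lt_eqF.
set A := c / (1 - beta) ^+ 2 - x / (1 - beta).
set B := - c / (1 - beta) ^+ 2 + x / (1 - beta).
set C := - c / (1 - beta).
have -> : (fun N => Jfin c beta N 0 x) =
    (fun N => (A + B * beta ^+ N) + C * (N%:R * beta ^+ N)).
  apply: funext => N; rewrite JfinE subn0.
  have gsumE : gsum beta N = (1 - beta)^-1 * (1 - beta ^+ N).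
    by rewrite -gsum_closed mulKf.
  have gsum1E : gsum1 beta N = (1 - beta)^-1 * (gsum beta N - N%:R * beta ^+ N).
    by rewrite -gsum1_closed mulKf.
  by rewrite gsum1E gsumE /A /B /C; field.
suff lim : (fun N : nat => (A + B * beta ^+ N) + C * (N%:R * beta ^+ N)) @ \oo -->
    (A + B * 0) + C * 0 by rewrite !mulr0 !addr0 in lim.
apply: cvgD; [apply: cvgD; first exact: cvg_cst | apply: cvgMl_tmp; exact: Nbeta_cvg].
by apply: cvgMl_tmp; apply: cvg_expr; rewrite ger0_norm.
Qed.

End Limits.

Definition gval {R : realType} {d : measure_display} {T : measurableType d}
  (rho piR : (T -> R) -> \bar R) (Y Z : T -> R) (f : R -> R) : R :=
  fine (rho (fun w => (f (Y w) - Z w)%R)) + piRf piR Y f.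

Definition cval {R : realType} {d : measure_display} {T : measurableType d}
  (rho piR : (T -> R) -> \bar R) (Y Z : T -> R) : R :=
  fine (ereal_inf [set static_obj rho piR Y Z f | f in Fset]).

(* The standing assumptions of the model; M is an essential bound of Z. *)
Record reinsurance_model {R : realType} {d : measure_display} {T : measurableType d}
    (P : probability T R) (p : R) (Y Z : T -> R) (rho piR : (T -> R) -> \bar R)
    (beta M : R) : Prop := ReinsuranceModel {
  p_ge1 : 1 <= p;
  Y_Lpplus : Lpplus P p Y;
  Z_meas : measurable_fun setT Z;
  Z_ge0 : {ae P, forall w, 0 <= Z w};
  Z_leM : {ae P, forall w, Z w <= M};
  piR_mono : rm_monotone (Lpplus P p) piR;
  piR_normalized : rm_normalized piR;
  piR_fatou : rm_fatou P (Lpplus P p) piR;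
  piRY_lty : (piR Y < +oo)%E;
  rho_law_inv : rm_law_invariant P (Lp P p) rho;
  rho_normalized : rm_normalized rho;
  rho_monetary : rm_monetary (Lp P p) rho;
  rho_pos_hom : rm_pos_homogeneous (Lp P p) rho;
  rho_fatou : rm_fatou P (Lp P p) rho;
  rhoY_lty : (rho Y < +oo)%E;
  beta_ge0 : 0 <= beta }.

Section Model.
Context {R : realType} {d : measure_display} {T : measurableType d}.
Variables (P : probability T R) (p : R) (Y Z : T -> R) (rho piR : (T -> R) -> \bar R).
Variables (beta M : R).
Hypothesis model : reinsurance_model P p Y Z rho piR beta M.

Let hp : 1 <= p := p_ge1 model.
Let rho_mono : rm_monotone (Lp P p) rho := (rho_monetary model).1.
Let Lpp := Lp P p.
Local Notation G := (gval rho piR Y Z).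
Local Notation c := (cval rho piR Y Z).
Local Notation Top := (Top rho piR Y Z beta).
Local Notation polval := (polval rho piR Y Z beta).

Lemma Y_ge0 w : 0 <= Y w. Proof. exact: (Y_Lpplus model).2. Qed.
Lemma Y_Lp : Lpp Y. Proof. exact: (Y_Lpplus model).1. Qed.

Let M0 := Num.max M 0.
Let Zclip w := Num.min (Num.max (Z w) 0) M0.

Lemma Zclip_ae : {ae P, forall w, Z w = Zclip w}.
Proof.
apply: filterS2 (Z_ge0 model) (Z_leM model) => w z0 zM.
by rewrite /Zclip max_l // min_l // (le_trans zM) // le_max lexx.
Qed.

Lemma Zclip_meas : measurable_fun setT Zclip.
Proof.
apply: measurable_minr; last exact: measurable_cst.
by apply: measurable_maxr; [exact: Z_meas model | exact: measurable_cst].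
Qed.

Lemma Zclip_bnd w : 0 <= Zclip w <= M0.
Proof.
by rewrite /Zclip; apply/andP; split; [rewrite le_min !max0_ge0 | rewrite ge_min lexx orbT].
Qed.

Lemma Z_Lp : Lpp Z.
Proof.
apply: (Lp_dom hp (Z_meas model) (Lp_cst P hp M0)).
apply: filterS2 (Z_ge0 model) (Z_leM model) => w z0 zM.
by rewrite !ger0_norm ?max0_ge0 // (le_trans zM) // le_max lexx.
Qed.

(* f(Y) is measurable for every f in F, as f is continuous on [0, +oo). *)
Lemma FY_meas f : Fset f -> measurable_fun setT (fun w => f (Y w)).
Proof.
move=> Ff; have -> : (fun w => f (Y w)) = (fun t => f (Num.max t 0)) \o Y.
  by apply: funext => w /=; rewrite max_l // Y_ge0.
apply: measurableT_comp (proj1 Y_Lp).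
exact: continuous_measurable_fun (Fset_clip_continuous Ff).
Qed.

Lemma net_loss_dom f w : Fset f -> `|f (Y w) - Z w| <= `|Y w| + `|Z w|.
Proof.
move=> Ff; have [fY0 fYY] := Ff.1 _ (Y_ge0 w).
by apply: (le_trans (ler_normB _ _)); rewrite lerD2r !ger0_norm ?Y_ge0.
Qed.

Lemma ceded_dom f w : Fset f -> `|Y w - f (Y w)| <= Y w.
Proof.
move=> Ff; have [fY0 fYY] := Ff.1 _ (Y_ge0 w).
by rewrite ger0_norm ?subr_ge0 // lerBlDr lerDl.
Qed.

Lemma net_loss_Lp f : Fset f -> Lpp (fun w => f (Y w) - Z w).
Proof.
move=> Ff; apply: (Lp_dom hp _ (Lp_add hp (Lp_abs hp Y_Lp) (Lp_abs hp Z_Lp))).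
  by apply: measurable_funB; [exact: FY_meas | exact: Z_meas model].
apply: aeW => w; rewrite (ger0_norm (addr_ge0 (normr_ge0 _) (normr_ge0 _))).
exact: net_loss_dom.
Qed.

Lemma net_loss_clip_Lp f : Fset f -> Lpp (fun w => f (Y w) - Zclip w).
Proof.
move=> Ff; apply: (Lp_ae hp _ (net_loss_Lp Ff)).
  by apply: measurable_funB; [exact: FY_meas | exact: Zclip_meas].
by apply: filterS Zclip_ae => w ->.
Qed.

Lemma ceded_Lpplus f : Fset f -> Lpplus P p (fun w => Y w - f (Y w)).
Proof.
move=> Ff; split; last by move=> w; rewrite subr_ge0; exact: (Ff.1 _ (Y_ge0 w)).2.
apply: (Lp_dom hp _ Y_Lp).
  by apply: measurable_funB; [exact: (proj1 Y_Lp) | exact: FY_meas].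
by apply: aeW => w; rewrite [`|Y w|]ger0_norm ?Y_ge0 ?ceded_dom.
Qed.

Lemma Lpplus0 : Lpplus P p (fun _ => 0).
Proof. by split => //; exact: Lp_cst. Qed.

Lemma premium_bnd f : Fset f ->
  piR (fun w => Y w - f (Y w)) = (piRf piR Y f)%:E /\ 0 <= piRf piR Y f <= fine (piR Y).
Proof.
move=> Ff; have fY w := Ff.1 (Y w) (Y_ge0 w).
have lo : (0 <= piR (fun w => (Y w - f (Y w))%R))%E.
  rewrite -(piR_normalized model); apply: (piR_mono model) Lpplus0 (ceded_Lpplus Ff) _.
  by move=> w; rewrite subr_ge0 (fY w).2.
have up : (piR (fun w => (Y w - f (Y w))%R) <= piR Y)%E.
  apply: (piR_mono model) (ceded_Lpplus Ff) (Y_Lpplus model) _.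
  by move=> w; rewrite lerBlDr lerDl (fY w).1.
have piRY_fin : piR Y \is a fin_num.
  by rewrite ge0_fin_numE ?(piRY_lty model) // (le_trans lo up).
have fin : piR (fun w => Y w - f (Y w)) \is a fin_num.
  by rewrite ge0_fin_numE // (le_lt_trans up) // (piRY_lty model).
by rewrite /piRf fineK //; split => //; rewrite fine_ge0 //= fine_le.
Qed.

Lemma rho_cst_model (a : R) : rho (fun _ => a) = a%:E.
Proof. exact: rho_cst hp a (rho_normalized model) (rho_monetary model).2. Qed.

Lemma rho_net_loss_bnd f : Fset f ->
  ((- M0)%:E <= rho (fun w => (f (Y w) - Z w)%R) <= rho Y)%E.
Proof.
move=> Ff; have fY w := Ff.1 (Y w) (Y_ge0 w).
rewrite (rho_ae (rho_law_inv model) (net_loss_Lp Ff) (net_loss_clip_Lp Ff)); last first.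
  by apply: filterS Zclip_ae => w ->.
apply/andP; split.
- rewrite -rho_cst_model; apply: rho_mono (Lp_cst P hp _) (net_loss_clip_Lp Ff) _.
  by move=> w; have := Zclip_bnd w; have := fY w; case=> ? ? /andP[? ?]; lra.
- apply: rho_mono (net_loss_clip_Lp Ff) Y_Lp _.
  by move=> w; have := Zclip_bnd w; have := fY w; case=> ? ? /andP[? ?]; lra.
Qed.

Lemma rhoY_fin : rho Y \is a fin_num.
Proof.
rewrite ge0_fin_numE ?(rhoY_lty model) // -(rho_normalized model).
exact: rho_mono (Lp_cst P hp 0) Y_Lp Y_ge0.
Qed.

Lemma rho_net_loss_fin f : Fset f -> rho (fun w => (f (Y w) - Z w)%R) \is a fin_num.
Proof.
move=> Ff; have /andP[lo up] := rho_net_loss_bnd Ff.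
by apply: (@fin_num_between _ (- M0) (fine (rho Y))); rewrite lo fineK ?rhoY_fin.
Qed.

Let Gmax := fine (rho Y) + fine (piR Y).

Lemma static_obj_gval f : Fset f ->
  static_obj rho piR Y Z f = (G f)%:E /\ - M0 <= G f <= Gmax.
Proof.
move=> Ff; have /andP[lo up] := rho_net_loss_bnd Ff.
have rho_fin := rho_net_loss_fin Ff.
rewrite /static_obj /gval -{1}(fineK rho_fin); split => //.
have [_ /andP[pi0 piY]] := premium_bnd Ff.
have lo' : - M0 <= fine (rho (fun w => (f (Y w) - Z w)%R)) by rewrite -lee_fin fineK.
have up' : fine (rho (fun w => (f (Y w) - Z w)%R)) <= fine (rho Y) by rewrite fine_le ?rhoY_fin.
by rewrite /Gmax; apply/andP; split; lra.
Qed.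

Lemma cinf_fin : ereal_inf [set static_obj rho piR Y Z f | f in Fset] \is a fin_num.
Proof.
apply: (@fin_num_between _ (- M0) (G (fun _ => 0))); apply/andP; split.
  apply: le_ereal_inf_tmp => _ [f Ff <-].
  by have [-> /andP[lo _]] := static_obj_gval Ff; rewrite lee_fin.
have [<- _] := static_obj_gval Fset0.
by apply: ereal_inf_lbound; exists (fun _ => 0); [exact: Fset0 |].
Qed.

Lemma cval_le_gval f : Fset f -> c <= G f.
Proof.
move=> Ff; rewrite -lee_fin /cval (fineK cinf_fin).
have [<- _] := static_obj_gval Ff; apply: ereal_inf_lbound; by exists f.
Qed.

Lemma cval_approx e : 0 < e -> exists2 f, Fset f & G f < c + e.
Proof.
move=> e0; have : (ereal_inf [set static_obj rho piR Y Z f | f in Fset] < (c + e)%:E)%E.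
  by rewrite /cval EFinD (fineK cinf_fin) lteDl ?cinf_fin ?lte_fin.
move=> /ereal_inf_lt [_ [f Ff <-]]; have [-> _] := static_obj_gval Ff.
by rewrite lte_fin; exists f.
Qed.

(* Key identity: T_f maps the affine function y |-> a - b y (b >= 0) to an
   affine function, by translation invariance and positive homogeneity. *)
Lemma Top_affine f (v : R -> R) (a b x : R) : Fset f -> 0 <= b ->
  (forall y, v y = a - y * b) ->
  Top f v x = ((1 + beta * b) * G f + beta * a - (1 + beta * b) * x)%:E.
Proof.
move=> Ff b0 v_aff; rewrite /Top.
set l := 1 + beta * b.
have l0 : 0 <= l by rewrite addr_ge0 // mulr_ge0 // (beta_ge0 model).
set K := l * piRf piR Y f - l * x + beta * a.
have -> : (fun w => f (Y w) + piRf piR Y f - Z w - x +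
     beta * v (x + Z w - f (Y w) - piRf piR Y f)) =
     (fun w => (fun w => l * (f (Y w) - Z w)) w + K).
  by apply: funext => w; rewrite v_aff /K /l; ring.
rewrite (rho_monetary model).2; last exact: Lp_scale (net_loss_Lp Ff).
rewrite (rho_pos_hom model) //; last exact: net_loss_Lp.
rewrite -(fineK (rho_net_loss_fin Ff)) -EFinM -EFinD; congr EFin.
by rewrite /gval /K; ring.
Qed.

Lemma Bellman_step f N n x : (n < N)%N -> Fset f ->
  Top f (Jfin c beta N n.+1) x = (Jfin c beta N n x + gsum beta (N - n) * (G f - c))%:E.
Proof.
move=> nN Ff.
rewrite (@Top_affine f _ (c * gsum1 beta (N - n.+1)) (gsum beta (N - n.+1))) //.
- by rewrite !JfinE -(subnSK nN) gsum1S gsumS; congr EFin; ring.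
- exact: gsum_ge0 (beta_ge0 model).
Qed.

Lemma stationary_value fs : Fset fs -> G fs = c -> forall m k x,
  polval (fun _ _ => fs) k m x = (c * gsum1 beta m - x * gsum beta m)%:E.
Proof.
move=> Ffs Gfs; elim => [|m IH] k x /=; first by rewrite gsum0 gsum10 !mulr0 subrr.
rewrite (@Top_affine fs _ (c * gsum1 beta m) (gsum beta m)) //.
- by rewrite gsum1S gsumS Gfs; congr EFin; ring.
- exact: gsum_ge0 (beta_ge0 model).
- by move=> y; rewrite IH.
Qed.

Let step_arg f (v : R -> R) (x : R) (w : T) : R :=
  f (Y w) + piRf piR Y f - Z w - x + beta * v (x + Z w - f (Y w) - piRf piR Y f).

Lemma step_arg_affine_Lp f (a b x : R) : Fset f ->
  Lpp (step_arg f (fun y => a - y * b) x).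
Proof.
move=> Ff; have -> : step_arg f (fun y => a - y * b) x =
    (fun w => (fun w => (1 + beta * b) * (f (Y w) - Z w)) w +
      (fun _ => (1 + beta * b) * (piRf piR Y f - x) + beta * a) w).
  by apply: funext => w; rewrite /step_arg; ring.
by apply: Lp_add => //; [exact: Lp_scale (net_loss_Lp Ff) | exact: Lp_cst].
Qed.

(* Monotonicity of T_f for a measurable v squeezed between two parallel
   affine functions; the squeeze also makes the argument of rho lie in Lp. *)
Lemma Top_sandwich f (v : R -> R) (a a' b x : R) : Fset f -> measurable_fun setT v ->
  (forall y, a - y * b <= v y <= a' - y * b) ->
  (Top f (fun y => (a - y * b)%R) x <= Top f v x <= Top f (fun y => (a' - y * b)%R) x)%E.
Proof.
move=> Ff mv v_bnd.
have arg_bnd w : step_arg f (fun y => a - y * b) x w <= step_arg f v x w <=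
    step_arg f (fun y => a' - y * b) x w.
  have /andP[lo up] := v_bnd (x + Z w - f (Y w) - piRf piR Y f).
  by rewrite /step_arg !lerD2l !ler_wpM2l ?(beta_ge0 model).
have arg_meas : measurable_fun setT (step_arg f v x).
  apply: measurable_funD.
    apply: measurable_funB => //; apply: measurable_funB; last exact: Z_meas model.
    by apply: measurable_funD => //; exact: FY_meas.
  apply: measurable_funM => //; apply: measurableT_comp mv _.
  apply: measurable_funB => //; apply: measurable_funB; last exact: FY_meas.
  by apply: measurable_funD => //; exact: Z_meas model.
have argL := step_arg_affine_Lp a b x Ff.
have argU := step_arg_affine_Lp a' b x Ff.
have arg_Lp := Lp_between hp arg_meas argL argU arg_bnd.
by apply/andP; split; apply: rho_mono => // w; have /andP[] := arg_bnd w.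
Qed.

Lemma policy_value_bounds pol : admissible_policy rho piR Y Z beta pol ->
  forall m k y, ((c * gsum1 beta m - y * gsum beta m)%:E <= polval pol k m y <=
                 (Gmax * gsum1 beta m - y * gsum beta m)%:E)%E.
Proof.
move=> [polF [pol_fin pol_meas]]; elim => [|m IH] k y /=.
  by rewrite gsum0 gsum10 !mulr0 subrr lexx.
set f := pol k y; have Ff : Fset f := polF k y.
have b0 := gsum_ge0 m (beta_ge0 model).
have next_bnd z : c * gsum1 beta m - z * gsum beta m <=
    fine (polval pol k.+1 m z) <= Gmax * gsum1 beta m - z * gsum beta m.
  by rewrite -!lee_fin fineK ?pol_fin ?IH.
have /andP[lo up] := Top_sandwich y Ff (pol_meas k.+1 m) next_bnd.
rewrite !(@Top_affine f _ _ (gsum beta m) y Ff b0 (fun _ => erefl)) in lo up.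
have [_ /andP[_ G_le]] := static_obj_gval Ff.
have c_le := cval_le_gval Ff.
have sb0 : 0 <= 1 + beta * gsum beta m by rewrite addr_ge0 // mulr_ge0 // (beta_ge0 model).
apply/andP; split; [apply: le_trans lo | apply: le_trans up _]; rewrite lee_fin gsum1S gsumS.
- by have := ler_wpM2l sb0 c_le; lra.
- by have := ler_wpM2l sb0 G_le; lra.
Qed.

(* G only depends on the values of f on [0, +oo), where Y lives. *)
Lemma gval_clip g : G (fun t => g (Num.max t 0)) = G g.
Proof.
have clipY w : g (Num.max (Y w) 0) = g (Y w) by rewrite max_l ?Y_ge0.
rewrite /gval /piRf.
have -> : (fun w => (g (Num.max (Y w) 0) - Z w)%R) = (fun w => (g (Y w) - Z w)%R).
  by apply: funext => w; rewrite clipY.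
have -> : (fun w => (Y w - g (Num.max (Y w) 0))%R) = (fun w => (Y w - g (Y w))%R).
  by apply: funext => w; rewrite clipY.
by [].
Qed.

(* Lower semicontinuity of G along pointwise convergence on [0, +oo), from
   the Fatou property of rho and pi_R (with dominating variables |Y| + |Z|
   and Y). *)
Lemma gval_lsc (gs : nat -> R -> R) f : (forall k, Fset (gs k)) -> Fset f ->
  (forall t, 0 <= t -> gs k t @[k --> \oo] --> f t) ->
  forall e, 0 < e -> \forall k \near \oo, G f < G (gs k) + e.
Proof.
move=> Fgs Ff gs_f e e0.
have rho_liminf : (rho (fun w => (f (Y w) - Z w)%R) <=
    limn_einf (fun k => rho (fun w => (gs k (Y w) - Z w)%R)))%E.
  apply: (rho_fatou model (fun k => net_loss_Lp (Fgs k)) (net_loss_Lp Ff)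
  (Lp_add hp (Lp_abs hp Y_Lp) (Lp_abs hp Z_Lp))
  (aeW P (fun w => cvgB (gs_f _ (Y_ge0 w)) (cvg_cst (Z w))))
  (fun k => aeW P (fun w => net_loss_dom w (Fgs k)))).
have piR_liminf : (piR (fun w => (Y w - f (Y w))%R) <=
    limn_einf (fun k => piR (fun w => (Y w - gs k (Y w))%R)))%E.
  apply: (piR_fatou model (fun k => ceded_Lpplus (Fgs k)) (ceded_Lpplus Ff)
  (Y_Lpplus model) (aeW P (fun w => cvgB (cvg_cst (Y w)) (gs_f _ (Y_ge0 w))))
  (fun k => aeW P (fun w => ceded_dom w (Fgs k)))).
have [piR_f _] := premium_bnd Ff.
set a := fine (rho (fun w => (f (Y w) - Z w)%R)).
have e2 : 0 < e / 2 by rewrite divr_gt0.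
have rho_f_gt : ((a - e / 2)%:E < rho (fun w => (f (Y w) - Z w)%R))%E.
  by rewrite -(fineK (rho_net_loss_fin Ff)) lte_fin ltrBlDr ltrDl.
have piR_f_gt : ((piRf piR Y f - e / 2)%:E < piR (fun w => (Y w - f (Y w))%R))%E.
  by rewrite piR_f lte_fin ltrBlDr ltrDl.
apply: filterS2 (lt_limn_einf_near (lt_le_trans rho_f_gt rho_liminf))
  (lt_limn_einf_near (lt_le_trans piR_f_gt piR_liminf)) => k.
rewrite -(fineK (rho_net_loss_fin (Fgs k))) (premium_bnd (Fgs k)).1 !lte_fin.
by rewrite /gval -/a; lra.
Qed.

(* Existence of a minimizer of the static problem: a cluster point of
   clipped near-minimizers is in F, a diagonal sequence converges to it
   pointwise on [0, +oo), and G is lower semicontinuous along it. *)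
Lemma static_minimizer : exists2 fs, Fset fs & G fs = c.
Proof.
pose S n := [set g : R -> R |
  [/\ Fset g, forall t, 0 <= g t <= Num.max t 0 & G g < c + n.+1%:R^-1]].
have Sne n : S n !=set0.
  have n_pos : 0 < n.+1%:R^-1 :> R by rewrite invr_gt0.
  have [g Fg Gg] := cval_approx n_pos.
  exists (fun t => g (Num.max t 0)); split; first exact: Fset_clip.
    by move=> t; exact: Fset_clip_bnd.
  by rewrite gval_clip.
have Sdec n m : (m <= n)%N -> S n `<=` S m.
  move=> mn g [Fg g_box Gg]; split => //; apply: (lt_le_trans Gg).
  by rewrite lerD2l lef_pV2 ?posrE ?ltr0n // ler_nat ltnS.
have [f [f_box f_cluster]] := cluster_exists Sne Sdec (fun n g => fun '(And3 _ g_box _) => g_box).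
have Ff : Fset f.
  apply: Fset_of_approx f_box _ => s t e e0.
  have [g [[Fg _ _] g_close]] := f_cluster 0%N 2%N (fun k => if k is 0%N then s else t) e e0.
  by exists g; split => //; split; [exact: (g_close 0%N) | exact: (g_close 1%N)].
have /choice [gs gs_grid] : forall j, exists g, S j g /\ forall k,
    (k < j.+1 * j.+1)%N -> `|g (grid j k) - f (grid j k)| < j.+1%:R^-1.
  by move=> j; apply: f_cluster; rewrite invr_gt0.
have Fgs j : Fset (gs j) by case: (gs_grid j) => -[].
have gs_f := grid_cvg Ff Fgs (fun j => (gs_grid j).2).
exists f => //; apply/eqP; rewrite eq_le cval_le_gval // andbT.
apply/ler_addgt0Pr => e e0.
have e2 : 0 < e / 2 by rewrite divr_gt0.
have [k [Gf_lt k_gt]] := filter_ex (filterI (gval_lsc Fgs Ff gs_f e2) (nbhs_infty_gtr (2 / e))).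
have [_ _ Gk] := (gs_grid k).1.
have k_inv : k.+1%:R^-1 < e / 2.
  by rewrite invf_plt ?posrE ?ltr0n // invf_div (lt_trans k_gt) // ltr_nat.
apply/ltW/(lt_trans Gf_lt); rewrite [X in _ < c + X](splitr e) addrA ltrD2r.
by apply: (lt_trans Gk); rewrite ltrD2l.
Qed.

Lemma Bellman_equation fs : Fset fs -> G fs = c -> forall N n x, (n < N)%N ->
  (Jfin c beta N n x)%:E = ereal_inf [set Top f (Jfin c beta N n.+1) x | f in Fset]
  /\ (Jfin c beta N n x)%:E = Top fs (Jfin c beta N n.+1) x.
Proof.
move=> Ffs Gfs N n x nN.
have attained : (Jfin c beta N n x)%:E = Top fs (Jfin c beta N n.+1) x.
  by rewrite Bellman_step // Gfs subrr mulr0 addr0.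
split => //; apply/eqP; rewrite eq_le; apply/andP; split.
- apply: le_ereal_inf_tmp => _ [f Ff <-]; rewrite Bellman_step // lee_fin lerDl.
  by apply: mulr_ge0; [exact: gsum_ge0 (beta_ge0 model) | rewrite subr_ge0 cval_le_gval].
- by rewrite attained; apply: ereal_inf_lbound; exists fs.
Qed.

End Model.

Theorem mainTheorem11 (R : realType) (d : measure_display) (T : measurableType d)
  (P : probability T R) (p : R) (Y Z : T -> R)
  (rho piR : (T -> R) -> \bar R) (beta : R) :
  1 <= p ->
  (* Y in L^p_+, Z in L^oo_+ *)
  Lpplus P p Y ->
  measurable_fun setT Z -> {ae P, forall w, 0 <= Z w} ->
  (exists M : R, {ae P, forall w, Z w <= M}) ->
  (* premium principle *)
  rm_law_invariant P (Lpplus P p) piR -> rm_monotone (Lpplus P p) piR ->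
  rm_normalized piR -> rm_fatou P (Lpplus P p) piR -> (piR Y < +oo)%E ->
  (* risk measure *)
  rm_law_invariant P (Lp P p) rho -> rm_normalized rho -> rm_monetary (Lp P p) rho ->
  rm_pos_homogeneous (Lp P p) rho -> rm_fatou P (Lp P p) rho -> (rho Y < +oo)%E ->
  0 < beta <= 1 ->
  exists (fstar : R -> R) (c : R),
    [/\ (* fstar minimizes the static problem, with minimal value c *)
        Fset fstar /\ static_obj rho piR Y Z fstar = c%:E /\
        (forall f, Fset f -> (c%:E <= static_obj rho piR Y Z f)%E),
        (* finite horizon: the J_n given by the formula satisfy the Bellman
           recursion J_N = 0, J_n = inf_{f in F} T_f J_{n+1} ... *)
        (forall (N n : nat) (x : R), (n < N)%N ->
           (Jfin c beta N n x)%:E =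
             ereal_inf [set Top rho piR Y Z beta f (Jfin c beta N n.+1) x | f in Fset]%classic
           (* ... and the constant decision fstar attains the infimum, so the
              constant policy (fstar,...,fstar) has value J_n at every time n *)
           /\ (Jfin c beta N n x)%:E = Top rho piR Y Z beta fstar (Jfin c beta N n.+1) x)
        & (* infinite horizon *)
        (beta < 1 -> rm_proper (Lp P p) rho -> rm_subadditive (Lp P p) rho ->
         forall x : R,
           let Jinf := c / (1 - beta) ^+ 2 - x / (1 - beta) in
           (* J = lim_N J_N *)
           seq_cvg_to (fun N => Jfin c beta N 0 x) Jinf
           (* the stationary policy (fstar, fstar, ...) has infinite-horizon value J *)
           /\ eseq_cvg_to (fun N => horizon_val rho piR Y Z beta (fun _ _ => fstar) N x)
                 Jinf%:E
           (* and it is optimal among Markov policies *)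
           /\ (forall pol (l : \bar R),
                 admissible_policy rho piR Y Z beta pol ->
                 eseq_cvg_to (fun N => horizon_val rho piR Y Z beta pol N x) l ->
                 (Jinf%:E <= l)%E))].
Proof.
move=> hp hY hZm hZ0 [M hZM] _ piR_mono piR0 piR_fatou piRY rho_li rho0 rho_mon
  rho_hom rho_fatou rhoY /andP[beta_gt0 _].
have model : reinsurance_model P p Y Z rho piR beta M by split => //; exact: ltW.
have [fs Ffs Gfs] := static_minimizer model.
exists fs, (cval rho piR Y Z); split.
- split => //; split; first by rewrite (static_obj_gval model Ffs).1 Gfs.
  by move=> f Ff; rewrite (static_obj_gval model Ff).1 lee_fin (cval_le_gval model Ff).
- move=> N n x nN; exact (Bellman_equation model Ffs Gfs x nN).
- move=> beta_lt1 _ _ x Jinf.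
  have J_lim : seq_cvg_to (fun N => Jfin (cval rho piR Y Z) beta N 0 x) Jinf.
    exact: Jfin_lim (ltW beta_gt0) beta_lt1.
  have J_elim : (fun N => (Jfin (cval rho piR Y Z) beta N 0 x)%:E) @ \oo --> Jinf%:E.
    by apply: cvg_EFin; [exact: nearW | exact: J_lim].
  split => //; split.
  + have -> : (fun N => horizon_val rho piR Y Z beta (fun _ _ => fs) N x) =
              (fun N => (Jfin (cval rho piR Y Z) beta N 0 x)%:E).
      by apply: funext => N; rewrite /horizon_val (stationary_value model Ffs Gfs) JfinE subn0.
    exact: J_elim.
  + move=> pol l adm pol_lim; apply: (lee_cvg_to J_elim pol_lim); apply: nearW => N.
    by have /andP[lo _] := policy_value_bounds model adm N 0 x; rewrite JfinE subn0.
Qed.
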